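(* The tree theory $\mathsf{T}$ is interpretable in $\mathsf{Seq}^+$, and thus also in $\mathsf{Seq}$.
   Context: $\mathsf{Seq}$ is the theory in the language $\{e,\vdash,\circ\}$ ($e$ constant, $\vdash$ and $\circ$ binary functions) with axioms: ($\mathsf{Seq}_1$) $\forall xy[x\vdash y\neq e]$; ($\mathsf{Seq}_2$) $\forall x_1x_2y_1y_2[x_1\vdash x_2=y_1\vdash y_2\rightarrow(x_1=y_1\wedge x_2=y_2)]$; ($\mathsf{Seq}_3$) $\forall x[x\circ e=x]$; ($\mathsf{Seq}_4$) $\forall xyz[x\circ(y\vdash z)=(x\circ y)\vdash z]$; ($\mathsf{Seq}_5$) $\forall x[x=e\vee\exists yz[x=y\vdash z]]$. $\mathsf{Seq}^+$ extends $\mathsf{Seq}$ by ($\mathsf{Seq}^*_3$) $\forall x[x\circ e=x\wedge e\circ x=x]$, ($\mathsf{Seq}^*_5$) $\forall xyzw[x\circ y=z\circ w\leftrightarrow\exists u[(z=x\circ u\wedge u\circ w=y)\vee(x=z\circ u\wedge u\circ y=w)]]$, and ($\mathsf{Seq}^+_c$) $\forall xyz[(x\circ y=x\circ z\vee y\circ x=z\circ x)\rightarrow y=z]$. $\mathsf{T}$ is the theory in the language $\{\bot,\langle\cdot,\cdot\rangle,\sqsubseteq\}$ ($\bot$ constant, $\langle\cdot,\cdot\rangle$ binary function, $\sqsubseteq$ binary relation) with axioms: ($\mathsf{T}_1$) $\forall xy[\langle x,y\rangle\neq\bot]$; ($\mathsf{T}_2$) $\forall x_1x_2y_1y_2[\langle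 x_1,x_2\rangle=\langle y_1,y_2\rangle\rightarrow(x_1=y_1\wedge x_2=y_2)]$; ($\mathsf{T}_3$) $\forall x[x\sqsubseteq\bot\leftrightarrow x=\bot]$; ($\mathsf{T}_4$) $\forall xyz[x\sqsubseteq\langle y,z\rangle\leftrightarrow(x=\langle y,z\rangle\vee x\sqsubseteq y\vee x\sqsubseteq z)]$. *)

From Stdlib Require Import Arith.

Record SeqStr := {
  scar :> Type;
  s_e : scar;
  s_vdash : scar -> scar -> scar;
  s_circ : scar -> scar -> scar }.

Definition Seq_model (M : SeqStr) : Prop :=
  (forall x y : M, s_vdash M x y <> s_e M) /\
  (forall x1 x2 y1 y2 : M, s_vdash M x1 x2 = s_vdash M y1 y2 -> x1 = y1 /\ x2 = y2) /\
  (forall x : M, s_circ M x (s_e M) = x) /\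
  (forall x y z : M, s_circ M x (s_vdash M y z) = s_vdash M (s_circ M x y) z) /\
  (forall x : M, x = s_e M \/ exists y z, x = s_vdash M y z).

Definition SeqPlus_model (M : SeqStr) : Prop :=
  Seq_model M /\
  (forall x : M, s_circ M x (s_e M) = x /\ s_circ M (s_e M) x = x) /\
  (forall x y z w : M, s_circ M x y = s_circ M z w <->
     exists u, (z = s_circ M x u /\ s_circ M u w = y) \/
               (x = s_circ M z u /\ s_circ M u y = w)) /\
  (forall x y z : M, (s_circ M x y = s_circ M x z \/ s_circ M y x = s_circ M z x) -> y = z).

(** * First-order syntax over {e, |-, o}, de Bruijn variables *)
Inductive term :=
  | tvar : nat -> term
  | te : term
  | tvdash : term -> term -> term
  | tcirc : term -> term -> term.

Inductive form :=
  | fEq : term -> term -> form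
  | fFalse : form
  | fImp : form -> form -> form
  | fAnd : form -> form -> form
  | fOr : form -> form -> form
  | fAll : form -> form
  | fEx : form -> form.

Definition scons {M : Type} (a : M) (rho : nat -> M) : nat -> M :=
  fun n => match n with 0 => a | S k => rho k end.

Fixpoint teval (M : SeqStr) (rho : nat -> M) (t : term) : M :=
  match t with
  | tvar n => rho n
  | te => s_e M
  | tvdash a b => s_vdash M (teval M rho a) (teval M rho b)
  | tcirc a b => s_circ M (teval M rho a) (teval M rho b)
  end.

Fixpoint sat (M : SeqStr) (rho : nat -> M) (f : form) : Prop :=
  match f with
  | fEq a b => teval M rho a = teval M rho b
  | fFalse => False
  | fImp p q => sat M rho p -> sat M rho q
  | fAnd p q => sat M rho p /\ sat M rho q
  | fOr p q => sat M rho p \/ sat M rho q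
  | fAll p => forall a : M, sat M (scons a rho) p
  | fEx p => exists a : M, sat M (scons a rho) p
  end.

Fixpoint tbounded (n : nat) (t : term) : Prop :=
  match t with
  | tvar k => k < n
  | te => True
  | tvdash a b | tcirc a b => tbounded n a /\ tbounded n b
  end.

Fixpoint fbounded (n : nat) (f : form) : Prop :=
  match f with
  | fEq a b => tbounded n a /\ tbounded n b
  | fFalse => True
  | fImp p q | fAnd p q | fOr p q => fbounded n p /\ fbounded n q
  | fAll p | fEx p => fbounded (S n) p
  end.

(** * Interpretations of the language {bot, <.,.>, sqsubseteq} of T
    (multidimensional, parameter-free, with a defined equality;
    function symbols translated by formulas defining their graphs).
    Variables 0..m-1 hold the first m-tuple, m..2m-1 the second, etc. *)
Record interp := {
  i_dim : nat;
  i_dom : form;    (* vars 0..m-1 : the tuple x lies in the domain *)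
  i_eq : form;     (* vars x | y : x = y *)
  i_bot : form;    (* vars x : x = bot *)
  i_pair : form;   (* vars x | y | z : <x,y> = z *)
  i_sub : form }.  (* vars x | y : x sqsubseteq y *)

Definition interp_wf (I : interp) : Prop :=
  0 < i_dim I /\
  fbounded (i_dim I) (i_dom I) /\ fbounded (2 * i_dim I) (i_eq I) /\
  fbounded (i_dim I) (i_bot I) /\ fbounded (3 * i_dim I) (i_pair I) /\
  fbounded (2 * i_dim I) (i_sub I).

Definition blk {M : Type} (m : nat) (u rho : nat -> M) : nat -> M :=
  fun n => if n <? m then u n else rho (n - m).

(** A T-structure presented with a domain and an equivalence serving as
    equality, and the function symbols given by their graphs. *)
Record relTstr := {
  tcar : Type;
  tD : tcar -> Prop;
  tE : tcar -> tcar -> Prop;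
  tBot : tcar -> Prop;
  tPair : tcar -> tcar -> tcar -> Prop;
  tSub : tcar -> tcar -> Prop }.

Definition T_model (S : relTstr) : Prop :=
  let D := tD S in let E := tE S in let B := tBot S in
  let P := tPair S in let Sb := tSub S in
  (forall x, D x -> E x x) /\
  (forall x y, D x -> D y -> E x y -> E y x) /\
  (forall x y z, D x -> D y -> D z -> E x y -> E y z -> E x z) /\
  (exists b, D b /\ B b) /\
  (forall b b', D b -> D b' -> B b -> B b' -> E b b') /\
  (forall b b', D b -> D b' -> E b b' -> B b -> B b') /\
  (forall x y, D x -> D y -> exists z, D z /\ P x y z) /\
  (forall x y z z', D x -> D y -> D z -> D z' -> P x y z -> P x y z' -> E z z') /\
  (forall x y z x' y' z', D x -> D y -> D z -> D x' -> D y' -> D z' ->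
     E x x' -> E y y' -> E z z' -> P x y z -> P x' y' z') /\
  (forall x y x' y', D x -> D y -> D x' -> D y' ->
     E x x' -> E y y' -> Sb x y -> Sb x' y') /\
  (forall x y z b, D x -> D y -> D z -> D b -> P x y z -> B b -> ~ E z b) /\
  (forall x1 x2 y1 y2 z z', D x1 -> D x2 -> D y1 -> D y2 -> D z -> D z' ->
     P x1 x2 z -> P y1 y2 z' -> E z z' -> E x1 y1 /\ E x2 y2) /\
  (forall x b, D x -> D b -> B b -> (Sb x b <-> E x b)) /\
  (forall x y z w, D x -> D y -> D z -> D w -> P y z w ->
     (Sb x w <-> (E x w \/ Sb x y \/ Sb x z))).

(** The T-structure defined by I inside M; its elements are m-tuples
    (functions nat -> M of which only coordinates < m matter). *)
Definition induced (I : interp) (M : SeqStr) : relTstr :=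
  let m := i_dim I in
  let r0 : nat -> M := fun _ => s_e M in
  {| tcar := nat -> M;
     tD := fun u => sat M (blk m u r0) (i_dom I);
     tE := fun u v => sat M (blk m u (blk m v r0)) (i_eq I);
     tBot := fun u => sat M (blk m u r0) (i_bot I);
     tPair := fun u v w => sat M (blk m u (blk m v (blk m w r0))) (i_pair I);
     tSub := fun u v => sat M (blk m u (blk m v r0)) (i_sub I) |}.

(** T is interpretable in the theory whose models are given by Th:
    one interpretation I such that every model of Th induces a model of T.
    (By completeness this is equivalent to provability of the translated
    axioms and interpretation conditions in Th.) *)
Definition T_interpretable_in (Th : SeqStr -> Prop) : Prop :=
  exists I : interp, interp_wf I /\
    forall M : SeqStr, Th M -> T_model (induced I M).

(** Trees are coded by sequences themselves: [⊥] is the empty sequence [e] and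
    [⟨x, y⟩] is [x ⊢ y].  The relation [x ⊑ y] holds when some sequence
    [x = a_0, a_1, ..., a_n = y] has every entry an immediate component of the
    next one.  The axioms T3 and T4 then amount to peeling off the last entry of
    such a chain, which only needs the axioms of Seq; since every model of Seq^+
    is a model of Seq, the same interpretation works for Seq^+. *)

From Stdlib Require Import Lia.

Section CoordinateTStructure.

Variables (A : Type) (bot : A) (pair : A -> A -> A) (sub : A -> A -> Prop).
Variable D : (nat -> A) -> Prop.

Hypothesis D_total : forall u, D u.
Hypothesis pair_neq_bot : forall x y, pair x y <> bot.
Hypothesis pair_inj : forall x1 x2 y1 y2,
  pair x1 x2 = pair y1 y2 -> x1 = y1 /\ x2 = y2.
Hypothesis sub_bot : forall x, sub x bot <-> x = bot.
Hypothesis sub_pair : forall x y z,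
  sub x (pair y z) <-> x = pair y z \/ sub x y \/ sub x z.

Definition coord_Tstr : relTstr :=
  {| tcar := nat -> A;
     tD := D;
     tE := fun u v => u 0 = v 0;
     tBot := fun u => u 0 = bot;
     tPair := fun u v w => pair (u 0) (v 0) = w 0;
     tSub := fun u v => sub (u 0) (v 0) |}.

Lemma coord_T_model : T_model coord_Tstr.
Proof.
  unfold T_model; cbn.
  repeat match goal with |- _ /\ _ => split end.
  - reflexivity.
  - intros; congruence.
  - intros; congruence.
  - exists (fun _ => bot); auto.
  - intros; congruence.
  - intros; congruence.
  - intros x y _ _; exists (fun _ => pair (x 0) (y 0)); auto.
  - intros; congruence.
  - intros; congruence.
  - intros; congruence.
  - intros x y z b _ _ _ _ Hz Hb Hzb. apply (pair_neq_bot (x 0) (y 0)); congruence.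
  - intros x1 x2 y1 y2 z z' _ _ _ _ _ _ Hz Hz' Hzz'.
    apply pair_inj; congruence.
  - intros x b _ _ Hb; rewrite Hb; apply sub_bot.
  - intros x y z w _ _ _ _ Hw; rewrite <- Hw; apply sub_pair.
Qed.

End CoordinateTStructure.

Section SubtreesInSeq.

Variable M : SeqStr.

Local Notation e := (s_e M).
Local Notation "x ⊢ y" := (s_vdash M x y) (at level 50, left associativity).
Local Notation "x ∘ y" := (s_circ M x y) (at level 40, left associativity).

Definition ends_with (y P : M) : Prop := exists Q, P = Q ⊢ y.

Definition starts_with (x P : M) : Prop := exists v, P = (e ⊢ x) ∘ v.

Definition child_chain (P : M) : Prop :=
  forall u a b v, ((u ⊢ a) ⊢ b) ∘ v = P -> exists c, b = a ⊢ c \/ b = c ⊢ a.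

Definition subtree (x y : M) : Prop :=
  exists P, ends_with y P /\ starts_with x P /\ child_chain P.

Hypothesis vdash_neq_e : forall x y : M, x ⊢ y <> e.
Hypothesis vdash_inj : forall x1 x2 y1 y2 : M,
  x1 ⊢ x2 = y1 ⊢ y2 -> x1 = y1 /\ x2 = y2.
Hypothesis circ_e : forall x : M, x ∘ e = x.
Hypothesis circ_vdash : forall x y z : M, x ∘ (y ⊢ z) = (x ∘ y) ⊢ z.
Hypothesis e_or_vdash : forall x : M, x = e \/ exists y z, x = y ⊢ z.

Lemma circ_eq_e (s v : M) : s ∘ v = e -> s = e.
Proof.
  destruct (e_or_vdash v) as [-> | (v' & t & ->)].
  - now rewrite circ_e.
  - rewrite circ_vdash; intros H; destruct (vdash_neq_e _ _ H).
Qed.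

Lemma circ_eq_vdash (s v Q y : M) : s ∘ v = Q ⊢ y ->
  (v = e /\ s = Q ⊢ y) \/ exists v', v = v' ⊢ y /\ Q = s ∘ v'.
Proof.
  destruct (e_or_vdash v) as [-> | (v' & t & ->)].
  - rewrite circ_e; auto.
  - rewrite circ_vdash; intros H.
    destruct (vdash_inj _ _ _ _ H) as [<- ->]; eauto.
Qed.

Lemma subtree_refl (x : M) : subtree x x.
Proof.
  exists (e ⊢ x); split; [|split].
  - now exists e.
  - exists e; now rewrite circ_e.
  - intros u a b v Hv.
    destruct (circ_eq_vdash _ _ _ _ Hv) as [[_ H] | (v' & _ & H)].
    + destruct (vdash_inj _ _ _ _ H) as [H' _]; destruct (vdash_neq_e _ _ H').
    + destruct (vdash_neq_e _ _ (circ_eq_e _ _ (eq_sym H))).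
Qed.

Lemma subtree_step (x q y c : M) :
  subtree x q -> y = q ⊢ c \/ y = c ⊢ q -> subtree x y.
Proof.
  intros (P & (Q & HQ) & (v & Hv) & Hchain) Hy.
  exists (P ⊢ y); split; [|split].
  - now exists P.
  - exists (v ⊢ y); now rewrite circ_vdash, Hv.
  - intros u a b w Hw.
    destruct (circ_eq_vdash _ _ _ _ Hw) as [[_ H] | (w' & -> & H)].
    + destruct (vdash_inj _ _ _ _ H) as [Hua ->].
      rewrite HQ in Hua; destruct (vdash_inj _ _ _ _ Hua) as [_ ->]; eauto.
    + exact (Hchain u a b w' (eq_sym H)).
Qed.

Lemma subtree_inv (x y : M) : subtree x y ->
  x = y \/ exists q c, subtree x q /\ (y = q ⊢ c \/ y = c ⊢ q).
Proof.
  intros (P & (Q & ->) & (v & Hv) & Hchain).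
  destruct (e_or_vdash Q) as [-> | (Q' & q & ->)].
  - left; destruct (circ_eq_vdash _ _ _ _ (eq_sym Hv)) as [[_ H] | (v' & _ & H)].
    + now destruct (vdash_inj _ _ _ _ H).
    + destruct (vdash_neq_e _ _ (circ_eq_e _ _ (eq_sym H))).
  - right.
    destruct (Hchain Q' q y e) as (c & Hy); [now rewrite circ_e|].
    exists q, c; split; [|exact Hy].
    exists (Q' ⊢ q); split; [|split].
    + now exists Q'.
    + destruct (circ_eq_vdash _ _ _ _ (eq_sym Hv)) as [[_ H] | (v' & _ & H)].
      * destruct (vdash_inj _ _ _ _ H) as [H' _]; destruct (vdash_neq_e _ _ (eq_sym H')).
      * now exists v'.
    + intros u a b w Hw; apply (Hchain u a b (w ⊢ y)).
      now rewrite circ_vdash, Hw.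
Qed.

Lemma subtree_e (x : M) : subtree x e <-> x = e.
Proof.
  split.
  - intros [He | (q & c & _ & [H | H])]%subtree_inv; auto;
      destruct (vdash_neq_e _ _ (eq_sym H)).
  - intros ->; apply subtree_refl.
Qed.

Lemma subtree_vdash (x y z : M) :
  subtree x (y ⊢ z) <-> x = y ⊢ z \/ subtree x y \/ subtree x z.
Proof.
  split.
  - intros [Hx | (q & c & Hq & [H | H])]%subtree_inv; auto;
      destruct (vdash_inj _ _ _ _ H) as [-> ->]; auto.
  - intros [-> | [H | H]].
    + apply subtree_refl.
    + exact (subtree_step _ _ _ z H (or_introl eq_refl)).
    + exact (subtree_step _ _ _ y H (or_intror eq_refl)).
Qed.

End SubtreesInSeq.

(** [subtree] written out with de Bruijn indices; in the context of the
    interpretation, variable 0 is [x] and variable 1 is [y]. *)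
Definition subtree_form : form :=
  let last := fEx (fEq (tvar 1) (tvdash (tvar 0) (tvar 3))) in
  let first := fEx (fEq (tvar 1) (tcirc (tvdash te (tvar 2)) (tvar 0))) in
  let step := fAll (fAll (fAll (fAll
          (fImp (fEq (tcirc (tvdash (tvdash (tvar 3) (tvar 2)) (tvar 1)) (tvar 0)) (tvar 4))
                (fEx (fOr (fEq (tvar 2) (tvdash (tvar 3) (tvar 0)))
                          (fEq (tvar 2) (tvdash (tvar 0) (tvar 3))))))))) in
  fEx (fAnd last (fAnd first step)).

Definition tree_interp : interp :=
  {| i_dim := 1;
     i_dom := fEq te te;
     i_eq := fEq (tvar 0) (tvar 1);
     i_bot := fEq (tvar 0) te;
     i_pair := fEq (tvdash (tvar 0) (tvar 1)) (tvar 2);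
     i_sub := subtree_form |}.

Lemma tree_interp_wf : interp_wf tree_interp.
Proof. unfold interp_wf; cbn; repeat split; lia. Qed.

Lemma induced_tree_T_model (M : SeqStr) :
  Seq_model M -> T_model (induced tree_interp M).
Proof.
  intros (Hneq & Hinj & Hcirc_e & Hcirc_vdash & Hcases).
  (* [induced tree_interp M] computes to this instance of [coord_Tstr]. *)
  exact (coord_T_model M (s_e M) (s_vdash M) (subtree M)
           (fun _ => s_e M = s_e M) (fun _ => eq_refl) Hneq Hinj
           (subtree_e M Hneq Hinj Hcirc_e Hcirc_vdash Hcases)
           (subtree_vdash M Hneq Hinj Hcirc_e Hcirc_vdash Hcases)).
Qed.

Lemma T_interpretable_in_weaken (Th Th' : SeqStr -> Prop) :
  (forall M, Th' M -> Th M) -> T_interpretable_in Th -> T_interpretable_in Th'.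
Proof.
  intros HTh (I & Hwf & HI); exists I; split; [exact Hwf|].
  intros M HM; exact (HI M (HTh M HM)).
Qed.

Theorem theorem7 :
  T_interpretable_in SeqPlus_model /\ T_interpretable_in Seq_model.
Proof.
  assert (HSeq : T_interpretable_in Seq_model).
  { exists tree_interp; split; [exact tree_interp_wf | exact induced_tree_T_model]. }
  split; [|exact HSeq].
  apply (T_interpretable_in_weaken Seq_model); [|exact HSeq].
  now intros M [HM _].
Qed.
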